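(* Let $p$ be a prime number of the form $p = 9a^2 + 4b^2$ with integers $a, b$. Then the equation $p x^4 - 36 y^4 = z^2$ has no rational solutions $(x,y,z)$ other than the trivial solution $x=y=z=0$. *)

From mathcomp Require Import all_boot all_order all_algebra.

(** Clearing denominators and dividing out [gcd X Y] leaves a solution of
    [p X^4 - 36 Y^4 = Z^2] with [X], [Y] coprime, and then [3] does not divide
    [X].  As [p = (3a)^2 + (2b)^2], the triple [(u, v, p X^2)] with
    [u + v i = (3a - 2b i)(Z + 6 Y^2 i)] is Pythagorean; parametrizing it by a
    coprime pair [(m, n)] and multiplying back by [3a + 2b i] gives
    [X^2 (3a + 2b i)(m + n i)^2 = (m^2 + n^2)(Z + 6 Y^2 i)].  So
    [m^2 + n^2 = k X^2], where [k] divides [m^2 + n^2] and both parts of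
    [(3a + 2b i)(m + n i)^2]; every prime factor of such a [k] is [p], hence
    [k = 1] and [m^2 + n^2 = k X^2 = 1] modulo 3.  But [3] divides the
    imaginary part, which forces [m^2 = n^2 = 1], i.e. [m^2 + n^2 = 2],
    modulo 3. *)

From mathcomp Require Import all_boot all_order all_algebra.
From mathcomp Require Import zify ring.
Import GRing.Theory Num.Theory.
Local Open Scope ring_scope.

Lemma coprimez_dvd1 [d m n : int] :
  coprimez m n -> (d %| m)%Z -> (d %| n)%Z -> (d %| 1)%Z.
Proof. by move=> /eqP g1 dm dn; have := dvdz_gcd d m n; rewrite g1 dm dn. Qed.

Lemma Euclid_dvdzM (q : nat) (m n : int) : prime q ->
  (q%:Z %| m * n)%Z = (q%:Z %| m)%Z || (q%:Z %| n)%Z.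
Proof. by move=> q_pr; rewrite !dvdzE abszM Euclid_dvdM. Qed.

Lemma coprimez_cofactors [m n : int] : (m != 0) || (n != 0) ->
  exists g m' n' : int, [/\ g != 0, m = m' * g, n = n' * g & coprimez m' n'].
Proof.
rewrite -negb_and -gcdz_eq0 => g0; set g := gcdz m n.
exists g, (m %/ g)%Z, (n %/ g)%Z.
rewrite !divzK ?dvdz_gcdl ?dvdz_gcdr //; split=> //.
have := mulz_gcdl (m %/ g)%Z (n %/ g)%Z g.
rewrite !divzK ?dvdz_gcdl ?dvdz_gcdr // gez0_abs // => gcd_g.
by apply/eqP/(mulIf g0); rewrite mul1r.
Qed.

Lemma sqrz_mod3 (m : int) :
  (3 %| m)%Z /\ (m ^+ 2 %% 3 = 0)%Z \/ ~ (3 %| m)%Z /\ (m ^+ 2 %% 3 = 1)%Z.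
Proof. by rewrite expr2; case: (boolP (3 %| m)%Z) => m3; [left | right]; split=> //; nia. Qed.

Lemma sqrz_mod4 (m : int) : (m ^+ 2 %% 4 = m %% 2)%Z.
Proof. by rewrite expr2; nia. Qed.

Lemma pnat_eq1_mod [d p n : nat] : p.-nat n -> p = 1 %[mod d] -> n = 1 %[mod d].
Proof. by move=> pn p1; rewrite -(part_pnat_id pn) p_part -modnXm p1 modnXm exp1n. Qed.

Lemma pythagorean_param [u v w : int] : u ^+ 2 + v ^+ 2 = w ^+ 2 ->
  exists m n : int, [/\ coprimez m n, (m != 0) || (n != 0),
    w * (m ^+ 2 - n ^+ 2) = (m ^+ 2 + n ^+ 2) * u &
    w * (2 * m * n) = (m ^+ 2 + n ^+ 2) * v].
Proof.
move=> uvw.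
have [/andP[/eqP wu0 /eqP v0] | nz] := boolP ((w + u == 0) && (v == 0)).
  exists 0, 1; rewrite v0; split=> //.
  - by rewrite expr0n expr1n /=; lia.
  - by rewrite !(mulr0, mul0r).
rewrite negb_and in nz; have [g [m [n [g0 em en cmn]]]] := coprimez_cofactors nz.
have g20 : g ^+ 2 != 0 by rewrite expf_neq0.
have eu : u = m * g - w by rewrite -em; ring.
exists m, n; split=> //.
- by move: nz; rewrite em en !mulf_eq0 (negbTE g0) !orbF -negb_and; apply: contra.
- apply: (mulIf g20); apply/eqP; rewrite -subr_eq0; apply/eqP.
  transitivity ((w + u) * (w ^+ 2 - (u ^+ 2 + v ^+ 2))); last by rewrite uvw subrr mulr0.
  by rewrite eu en; ring.
- apply: (mulIf g20); apply/eqP; rewrite -subr_eq0; apply/eqP.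
  transitivity (v * (w ^+ 2 - (u ^+ 2 + v ^+ 2))); last by rewrite uvw subrr mulr0.
  by rewrite eu en; ring.
Qed.

Lemma quartic_X_ndvd3 [c X Y Z : int] :
  coprimez X Y -> c * X ^+ 4 - 36 * Y ^+ 4 = Z ^+ 2 -> ~ (3 %| X)%Z.
Proof.
move=> cXY + X3; have Y3 : ~ (3 %| Y)%Z by move=> /(coprimez_dvd1 cXY X3).
case/dvdzP: X3 => X' ->.
have -> : c * (X' * 3) ^+ 4 = 81 * (c * X' ^+ 4) by ring.
have -> : Y ^+ 4 = (Y ^+ 2) ^+ 2 by rewrite -exprM.
have := sqrz_mod3 Y; have := sqrz_mod3 (Y ^+ 2); have := sqrz_mod3 Z.
move: (c * X' ^+ 4) (Y ^+ 2) => A S Z3 SS SY e.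
have [W eZ] : exists W, Z = 3 * W by exists (Z %/ 3)%Z; lia.
move: e; rewrite eZ (_ : (3 * W) ^+ 2 = 9 * W ^+ 2); last by ring.
by have := sqrz_mod3 W; lia.
Qed.

Section PrimeSumOfSquares.

Context {p : nat} {a b : int}.
Hypotheses (p_prime : prime p) (p_sum : p%:Z = 9 * a ^+ 2 + 4 * b ^+ 2).

Lemma a_odd : ~ (2 %| a)%Z.
Proof.
move=> a2; have : (2%:Z %| p%:Z)%Z by rewrite p_sum; lia.
by rewrite dvdzE /= dvdn_prime2 // => /eqP p2; move: p_sum; rewrite -p2; lia.
Qed.

Lemma b_ndvd3 : ~ (3 %| b)%Z.
Proof.
move=> b3; have : (3%:Z %| p%:Z)%Z by rewrite p_sum; lia.
by rewrite dvdzE /= dvdn_prime2 // => /eqP p3; move: p_sum; rewrite -p3; lia.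
Qed.

Lemma p_mod3 : p = 1 %[mod 3].
Proof. by have := sqrz_mod3 b; have := b_ndvd3; lia. Qed.

(** [(3a + 2b i)(m + n i)^2 = re_form m n + 2 i im_form m n]. *)
Definition re_form (m n : int) := 3 * a * (m ^+ 2 - n ^+ 2) - 4 * b * m * n.
Definition im_form (m n : int) := 3 * a * m * n + b * (m ^+ 2 - n ^+ 2).

Lemma solution_forms [X Y Z : int] : p%:Z * X ^+ 4 - 36 * Y ^+ 4 = Z ^+ 2 ->
  exists m n : int, [/\ coprimez m n, 0 < m ^+ 2 + n ^+ 2,
    X ^+ 2 * re_form m n = Z * (m ^+ 2 + n ^+ 2) &
    X ^+ 2 * im_form m n = 3 * Y ^+ 2 * (m ^+ 2 + n ^+ 2)].
Proof.
move=> e.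
have pyth : (3 * a * Z + 12 * b * Y ^+ 2) ^+ 2 + (18 * a * Y ^+ 2 - 2 * b * Z) ^+ 2
          = (p%:Z * X ^+ 2) ^+ 2.
  have -> : (p%:Z * X ^+ 2) ^+ 2 = p%:Z * (Z ^+ 2 + 36 * Y ^+ 4) by rewrite -e; ring.
  by rewrite p_sum; ring.
have [m [n [cmn mn0 E1 E2]]] := pythagorean_param pyth.
have p0 : p%:Z != 0 by rewrite eqz_nat -lt0n prime_gt0.
have p20 : 2 * p%:Z != 0 by rewrite mulf_neq0.
set D := m ^+ 2 + n ^+ 2 in E1 E2 *.
(* Real and imaginary parts of [(3a + 2b i)(p X^2 (m + n i)^2 - D (u + v i)) = 0]. *)
exists m, n; split.
- exact: cmn.
- by rewrite lt0r addr_ge0 ?sqr_ge0 // paddr_eq0 ?sqr_ge0 // !sqrf_eq0 andbT negb_and.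
- apply/eqP; rewrite -(inj_eq (mulfI p0)) -subr_eq0; apply/eqP.
  transitivity (3 * a * (p%:Z * X ^+ 2 * (m ^+ 2 - n ^+ 2) - D * (3 * a * Z + 12 * b * Y ^+ 2))
    - 2 * b * (p%:Z * X ^+ 2 * (2 * m * n) - D * (18 * a * Y ^+ 2 - 2 * b * Z))).
    by rewrite /re_form /D p_sum; ring.
  by rewrite E1 E2 !subrr !mulr0 subr0.
- apply/eqP; rewrite -(inj_eq (mulfI p20)) -subr_eq0; apply/eqP.
  transitivity (2 * b * (p%:Z * X ^+ 2 * (m ^+ 2 - n ^+ 2) - D * (3 * a * Z + 12 * b * Y ^+ 2))
    + 3 * a * (p%:Z * X ^+ 2 * (2 * m * n) - D * (18 * a * Y ^+ 2 - 2 * b * Z))).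
    by rewrite /im_form /D p_sum; ring.
  by rewrite E1 E2 !subrr !mulr0 addr0.
Qed.

Lemma im_form_odd [m n : int] :
  ~ (2 %| m)%Z -> ~ (2 %| n)%Z -> ~ (2 %| im_form m n)%Z.
Proof.
move=> m2 n2; have a2 := a_odd; rewrite /im_form.
have [r ->] : exists r, m = 2 * r + 1 by exists (m %/ 2)%Z; lia.
have [s ->] : exists s, n = 2 * s + 1 by exists (n %/ 2)%Z; lia.
have [c ->] : exists c, a = 2 * c + 1 by exists (a %/ 2)%Z; lia.
by rewrite !expr2; lia.
Qed.

Lemma prime_dvd_forms [q : nat] [m n : int] : prime q -> coprimez m n ->
  (q%:Z %| m ^+ 2 + n ^+ 2)%Z -> (q%:Z %| re_form m n)%Z -> (q%:Z %| im_form m n)%Z ->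
  q = p.
Proof.
move=> q_pr cmn qD qre qim.
have q_ndvd1 : ~ (q%:Z %| 1)%Z by rewrite dvdzE /= dvdn1 => /eqP q1; rewrite q1 in q_pr.
have q_ndvd_m : ~ (q%:Z %| m)%Z.
  move=> qm; apply: q_ndvd1; apply: (coprimez_dvd1 cmn qm).
  have : (q%:Z %| n * n)%Z.
    have -> : n * n = (m ^+ 2 + n ^+ 2) - m * m by ring.
    by rewrite rpredB ?dvdz_mulr.
  by rewrite Euclid_dvdzM // orbb.
have [q2 | q_ne2] := eqVneq q 2.
  move: qD qim q_ndvd_m; rewrite q2 => D2 im2 m2.
  have n2 : ~ (2 %| n)%Z.
    by move: D2 m2 (sqrz_mod4 m) (sqrz_mod4 n); move: (m ^+ 2) (n ^+ 2); lia.
  by case: (im_form_odd m2 n2 im2).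
have : (q%:Z %| 2 * (p%:Z * (m * m)))%Z.
  have -> : 2 * (p%:Z * (m * m))
            = 3 * a * re_form m n + 4 * b * im_form m n + p%:Z * (m ^+ 2 + n ^+ 2).
    by rewrite /re_form /im_form p_sum; ring.
  by rewrite !rpredD ?dvdz_mull.
rewrite !Euclid_dvdzM // orbb => /or3P[q_dvd2 | q_dvdp | /q_ndvd_m //].
  by move: q_dvd2; rewrite dvdzE /= dvdn_prime2 // (negbTE q_ne2).
by move: q_dvdp; rewrite dvdzE /= dvdn_prime2 // => /eqP.
Qed.

Lemma common_dvd_forms_mod3 [k m n : int] : coprimez m n -> 0 < k ->
  (k %| m ^+ 2 + n ^+ 2)%Z -> (k %| re_form m n)%Z -> (k %| im_form m n)%Z ->
  (k = 1 %[mod 3])%Z.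
Proof.
move=> cmn k_gt0 kD kre kim.
have k_pnat : p.-nat `|k|%N.
  apply/pnatP; first by rewrite absz_gt0 lt0r_neq0.
  move=> q q_pr q_dvd_k; have qk : (q%:Z %| k)%Z by rewrite dvdzE.
  by rewrite inE (prime_dvd_forms q_pr cmn) ?(dvdz_trans qk).
by rewrite -(gtz0_abs k_gt0) !modz_nat (pnat_eq1_mod k_pnat p_mod3).
Qed.

Lemma im_form_mod3 [m n : int] : coprimez m n ->
  (3 %| im_form m n)%Z -> (m ^+ 2 + n ^+ 2 = 2 %[mod 3])%Z.
Proof.
move=> cmn im3; have : (3%:Z %| b * (m ^+ 2 - n ^+ 2))%Z by move: im3; rewrite /im_form; lia.
rewrite Euclid_dvdzM // => /orP[/b_ndvd3 // | mn3].
have not_both3 : ~ ((3 %| m)%Z /\ (3 %| n)%Z) by case=> m3 n3; have := coprimez_dvd1 cmn m3 n3.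
by move: mn3; have := sqrz_mod3 m; have := sqrz_mod3 n; lia.
Qed.

Lemma no_coprime_solution [X Y Z : int] :
  coprimez X Y -> p%:Z * X ^+ 4 - 36 * Y ^+ 4 = Z ^+ 2 -> False.
Proof.
move=> cXY e; have X3 := quartic_X_ndvd3 cXY e.
have [m [n [cmn D_gt0 Fre Fim]]] := solution_forms e.
set D := m ^+ 2 + n ^+ 2 in D_gt0 Fre Fim.
have cX : coprimez (X ^+ 2) (3 * Y ^+ 2).
  rewrite coprimezMr !coprimez_pexpl // coprimez_pexpr // cXY andbT.
  by rewrite coprimezE coprime_sym prime_coprime //; apply/negP.
have [k eD] : exists k, D = k * X ^+ 2.
  by apply/dvdzP; rewrite -(Gauss_dvdzr _ cX) -Fim dvdz_mulr.
have X20 : X ^+ 2 != 0 by rewrite expf_neq0 //; apply: contra_notN X3 => /eqP ->.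
have k_gt0 : 0 < k by rewrite -(pmulr_lgt0 _ (_ : 0 < X ^+ 2)) -?eD // lt0r X20 sqr_ge0.
have ere : re_form m n = Z * k by apply: (mulfI X20); rewrite Fre eD; ring.
have eim : im_form m n = 3 * Y ^+ 2 * k by apply: (mulfI X20); rewrite Fim eD; ring.
have k1 : (k = 1 %[mod 3])%Z.
  apply: (common_dvd_forms_mod3 cmn k_gt0).
  - by rewrite -/D eD; apply/dvdz_mulr/dvdzz.
  - by rewrite ere; apply/dvdz_mull/dvdzz.
  - by rewrite eim; apply/dvdz_mull/dvdzz.
have X2_1 : (X ^+ 2 = 1 %[mod 3])%Z by case: (sqrz_mod3 X) => [[]|[]].
have := im_form_mod3 cmn; rewrite eim => /(_ (dvdz_mulr _ (dvdz_mulr _ (dvdzz 3)))).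
by rewrite -/D eD -modzMm k1 X2_1.
Qed.

Lemma int_solution_trivial [X Y Z : int] :
  p%:Z * X ^+ 4 - 36 * Y ^+ 4 = Z ^+ 2 -> [/\ X = 0, Y = 0 & Z = 0].
Proof.
move=> e; have [/andP[/eqP X0 /eqP Y0] | XY0] := boolP ((X == 0) && (Y == 0)).
  by move: e; rewrite X0 Y0 !expr0n !mulr0 subr0 => /esym/eqP; rewrite sqrf_eq0 => /eqP.
exfalso; rewrite negb_and in XY0.
have [g [X1 [Y1 [g0 eX eY cXY]]]] := coprimez_cofactors XY0.
have eg : (g ^+ 2) ^+ 2 * (p%:Z * X1 ^+ 4 - 36 * Y1 ^+ 4) = Z ^+ 2 by rewrite -e eX eY; ring.
have [W eZ] : exists W, Z = W * g ^+ 2.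
  by apply/dvdzP; rewrite -(dvdz_pexp2r _ _ (_ : 0 < 2)%N) // -eg dvdz_mulr.
apply: (no_coprime_solution cXY (_ : _ = W ^+ 2)).
apply: (mulfI (expf_neq0 2 (expf_neq0 2 g0))); rewrite eg eZ; ring.
Qed.

End PrimeSumOfSquares.

Lemma rat_common_denominator (x y z : rat) : exists (N : rat) (X Y Z : int),
  [/\ N != 0, X%:~R = x * N, Y%:~R = y * N & Z%:~R = z * N ^+ 2].
Proof.
exists ((denq x)%:~R * (denq y)%:~R * (denq z)%:~R).
exists (numq x * (denq y * denq z)), (numq y * (denq x * denq z)).
exists (numq z * (denq x * denq y) ^+ 2 * denq z).
split; first by rewrite !mulf_neq0 // intr_eq0 denq_neq0.
all: by rewrite !intrM numqE; ring.
Qed.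

Theorem proposition2 (p : nat) (a b : int) :
  prime p ->
  (p%:Z = 9 * a ^+ 2 + 4 * b ^+ 2) ->
  forall x y z : rat,
    (p%:R * x ^+ 4 - 36 * y ^+ 4 = z ^+ 2) ->
    x = 0 /\ y = 0 /\ z = 0.
Proof.
move=> p_prime p_sum x y z e.
have [N [X [Y [Z [N0 eX eY eZ]]]]] := rat_common_denominator x y z.
have eXYZ : p%:Z * X ^+ 4 - 36 * Y ^+ 4 = Z ^+ 2.
  apply: (@intr_inj rat); rewrite rmorphB /= !rmorphM /= eX eY eZ -[(p%:Z)%:~R]/(p%:R : rat).
  transitivity ((p%:R * x ^+ 4 - 36 * y ^+ 4) * N ^+ 4); first by ring.
  by rewrite e; ring.
have [X0 Y0 Z0] := int_solution_trivial p_prime p_sum eXYZ.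
have N20 : N ^+ 2 != 0 by rewrite expf_neq0.
split; [apply: (mulIf N0) | split; [apply: (mulIf N0) | apply: (mulIf N20)]].
all: by rewrite mul0r -?eX -?eY -?eZ ?X0 ?Y0 ?Z0.
Qed.
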